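(* Let $G$ be a connected (finite, simple) graph, let $\mathcal{F}$ be a maximum induced forest of $G$ having the fewest connected components among all maximum induced forests of $G$, let $H$ be the contracted graph and let $B$ be a skeleton of $H$ whose configuration vector is lexicographically highest among all skeletons of $H$ (all as defined in the context). Let $B_1$ be the inner skeleton. Let $v$ be a non-tree vertex and let $x_{T_1}$ be a tree vertex that is a descendant of $v$ in $B_1$. If $vx_{T_1}$ is a 2-edge of $H$, then $x_{T_1}$ is a child of $v$ in $B_1$.
   Context: A maximum induced forest of $G$ is an induced forest with the maximum number of vertices. Let $\mathcal{T}$ be the set of connected components (trees) of $\mathcal{F}$ and $S=V(G)\setminus V(\mathcal{F})$. The graph $H$ has vertex set $\{x_T : T\in\mathcal{T}\}\cup S$ (the $x_T$ are tree vertices, the vertices of $S$ non-tree vertices) and edge set consisting of all edges of $G[S]$ together with all pairs $ux_T$ with $u\in S$, $T\in\mathcal{T}$ such that $u$ has at least one neighbor in $V(T)$ in $G$. An edge $ux_T$ of $H$ is a 2-edge if $u$ has at least two neighbors in $V(T)$ in $G$; all other edges of $H$ are 1-edges. A skeleton is a spanning tree of $H$ rooted at some tree vertex, with all edges directed towards the root. For a skeleton $B$ with root $r$, the level $\ell_B(v)$ of a vertex $v$ is the number of vertices on the path from $v$ to $r$ in $B$ (so $\ell_B(r)=1$), and the configuration vector of $B$ is $\langle |E_2(B)|, \sum_{v:\ell_B(v)=1}\deg_B(v), \sum_{v:\ell_B(v)=2}\deg_B(v),\ldots,\sum_{v:\ell_B(v)=|V(H)|}\deg_B(v)\rangle$,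 where $E_2(B)$ is the set of 2-edges of $B$ and $\deg_B(v)$ is the total (in plus out) degree of $v$ in $B$. Let $L_S$ be the set of vertices of $S$ that are leaves of $B$; the inner skeleton is $B_1=B[V(B)\setminus L_S]$. Parent, child and descendant refer to the rooted in-arborescence $B_1$ (edges directed from child to parent). *)

From mathcomp Require Import all_boot.
Set Implicit Arguments. Unset Strict Implicit. Unset Printing Implicit Defensive.

Section Defs.
Variable T : finType.
Variable e : rel T.   (* adjacency of the graph G (assumed symmetric, irreflexive) *)

Definition has_cycle_in (U : finType) (r : rel U) (A : {pred U}) : Prop :=
  exists c : seq U, [/\ {subset c <= A}, uniq c, 3 <= size c & cycle r c].

Definition induced_forest (F : {set T}) : Prop := ~ has_cycle_in e (mem F).

Definition max_induced_forest (F : {set T}) : Prop :=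
  induced_forest F /\ forall F' : {set T}, induced_forest F' -> #|F'| <= #|F|.

Definition relF (F : {set T}) : rel T := [rel x y | [&& x \in F, y \in F & e x y]].
Definition compF (F : {set T}) (x : T) : {set T} :=
  [set y in F | connect (relF F) x y].
Definition comps (F : {set T}) : {set {set T}} := [set compF F x | x in F].

(* vertices of the contracted graph H: inl T for a tree T (a component of F),
   inr u for a non-tree vertex u in S = V(G) \ F *)
Definition W : finType := ({set T} + T)%type.

Definition VH (F : {set T}) : {set W} :=
  [set x : W | match x with inl C => C \in comps F | inr u => u \notin F end].

Definition is_tree_vertex (x : W) : bool := if x is inl _ then true else false.

Definition Hadj (F : {set T}) (x y : W) : bool :=
  match x, y with
  | inr u, inr w => [&& u \notin F, w \notin F & e u w]
  | inr u, inl C => [&& u \notin F, C \in comps F & [exists w in C, e u w]]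
  | inl C, inr u => [&& u \notin F, C \in comps F & [exists w in C, e u w]]
  | inl _, inl _ => false
  end.

Definition two_edge (F : {set T}) (x y : W) : bool :=
  Hadj F x y &&
  match x, y with
  | inr u, inl C => 1 < #|[set w in C | e u w]|
  | inl C, inr u => 1 < #|[set w in C | e u w]|
  | _, _ => false
  end.

Definition skeleton (F : {set T}) (B : rel W) (r : W) : Prop :=
  [/\ symmetric B,
      (forall x y, B x y -> Hadj F x y),
      (forall x y, x \in VH F -> y \in VH F -> connect B x y),
      ~ has_cycle_in B (mem (VH F)) &
      ((r \in VH F) && is_tree_vertex r)].

Definition degB (B : rel W) (x : W) : nat := #|[set y | B x y]|.

(* level = number of vertices on the path from x to the root r in B,
   i.e. 1 + (distance from x to r in B) *)
Definition level (B : rel W) (r : W) (x : W) : nat :=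
  (find (fun n => [exists t : n.-tuple W, path B x t && (last x t == r)])
        (iota 0 #|W|)).+1.

Definition E2 (F : {set T}) (B : rel W) : {set {set W}} :=
  [set E : {set W} | [exists x, exists y, (E == [set x; y]) && B x y && two_edge F x y]].

Definition config (F : {set T}) (B : rel W) (r : W) : seq nat :=
  #|E2 F B| ::
  [seq \sum_(x in VH F | level B r x == k) degB B x | k <- iota 1 #|VH F|].

(* strict lexicographic order on sequences (used on sequences of equal length) *)
Fixpoint lex_lt (s t : seq nat) : bool :=
  match s, t with
  | a :: s', b :: t' => (a < b) || ((a == b) && lex_lt s' t')
  | _, _ => false
  end.

Definition LS (F : {set T}) (B : rel W) : {set W} :=
  [set x in VH F | ~~ is_tree_vertex x & degB B x == 1].

Definition inner (F : {set T}) (B : rel W) : rel W :=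
  [rel x y | [&& B x y, x \notin LS F B & y \notin LS F B]].

Definition descendant (B1 : rel W) (r x v : W) : Prop :=
  x != v /\ exists p : seq W, [/\ path B1 x p, last x p = r, uniq (x :: p) & v \in p].

Definition child (B1 : rel W) (r x v : W) : Prop :=
  exists p : seq W, [/\ path B1 x (v :: p), last v p = r & uniq (x :: v :: p)].

End Defs.

From mathcomp Require Import all_boot.
Set Implicit Arguments. Unset Strict Implicit. Unset Printing Implicit Defensive.

(* Suppose the path of B_1 from x_{T_1} to the root reaches v only after a
   first vertex q <> v.  Exchange the edge x_{T_1} q of B for the 2-edge
   x_{T_1} v.  Removing x_{T_1} q separates x_{T_1} from v, so the result is
   again a skeleton with the same root; it has at least as many 2-edges, and
   since x_{T_1} and q lie strictly below v, no vertex up to the level of v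
   changes level or degree, except v, which gains the neighbour x_{T_1}.  The
   configuration vector therefore increases lexicographically, contradicting
   the choice of B. *)

Section EdgeSurgery.
Variable U : finType.
Implicit Types (R : rel U) (A : {pred U}).

Definition rem_edge R (x y : U) : rel U :=
  [rel u w | R u w && ~~ ((u == x) && (w == y)) && ~~ ((u == y) && (w == x))].

Definition add_edge R (x y : U) : rel U :=
  [rel u w | R u w || ((u == x) && (w == y)) || ((u == y) && (w == x))].

Lemma rem_edge_sym R x y : symmetric R -> symmetric (rem_edge R x y).
Proof.
move=> R_sym u w; rewrite /rem_edge /= R_sym.
by case: (u == x); case: (w == y); case: (u == y); case: (w == x); rewrite ?andbF.
Qed.

Lemma add_edge_sym R x y : symmetric R -> symmetric (add_edge R x y).
Proof.
move=> R_sym u w; rewrite /add_edge /= R_sym.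
by case: (u == x); case: (w == y); case: (u == y); case: (w == x); rewrite ?orbF ?orbT.
Qed.

Lemma rem_edge_sub R x y : subrel (rem_edge R x y) R.
Proof. by move=> u w /andP[/andP[]]. Qed.

Lemma add_edge_sub R x y : subrel R (add_edge R x y).
Proof. by move=> u w Ruw; rewrite /add_edge /= Ruw. Qed.

Lemma rem_edge_off R x y u w : u != x -> w != x -> rem_edge R x y u w = R u w.
Proof. by move=> /negbTE ux /negbTE wx; rewrite /rem_edge /= ux wx /= andbF !andbT. Qed.

Lemma add_edge_off R x y u w : u != x -> w != x -> add_edge R x y u w = R u w.
Proof. by move=> /negbTE ux /negbTE wx; rewrite /add_edge /= ux wx /= andbF !orbF. Qed.

Lemma path_subset R A x s :
  (forall u w, R u w -> w \in A) -> path R x s -> {subset s <= A}.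
Proof.
move=> RA; elim: s x => [|y s IHs] x //= /andP[Rxy ys] z.
by rewrite inE => /predU1P[-> | /(IHs _ ys)//]; apply: RA Rxy.
Qed.

Lemma path_exit R (S : pred U) x0 y0 :
  (forall u w, R u w -> S u -> ~~ S w -> u = x0 /\ w = y0) ->
  forall t z, path R z t -> S z -> ~~ S (last z t) ->
  exists2 t', path R y0 t' & last y0 t' = last z t /\ size t' < size t.
Proof.
move=> exitS; elim=> [|w t IHt] z /=; first by move=> _ ->.
move=> /andP[Rzw wt] Sz Sl; case Sw: (S w).
  have [t' t'_path [t'_last t'_size]] := IHt w wt Sw Sl.
  by exists t' => //; split => //; apply: ltnW.
by have [_ wy0] := exitS _ _ Rzw Sz (negbT Sw); exists t; rewrite -?wy0.
Qed.

Lemma add_edge_acyclic R A a v : symmetric R -> ~ has_cycle_in R A ->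
  ~~ connect R a v -> ~ has_cycle_in (add_edge R a v) A.
Proof.
move=> R_sym R_acyc /negP Rav [c [cA c_uniq c_size c_cycle]].
have c_a : a \in c.
  apply/negPn/negP => ac; apply: R_acyc; exists c; split => //.
  case: c ac {cA c_uniq c_size} c_cycle => [|x s] // ac.
  apply: (sub_in_path (P := predC1 a)); first by move=> u w ua wa; rewrite add_edge_off.
  apply/allP => z; rewrite /= inE mem_rcons inE orbA orbb -in_cons => zc.
  by apply/eqP => za; rewrite -za zc in ac.
case/rot_to: c_a => i s c_rot.
have {}cA : {subset a :: s <= A} by move=> z; rewrite -c_rot mem_rot; apply: cA.
move: c_cycle c_uniq c_size; rewrite -(rot_cycle i) -(rot_uniq i) -(size_rot i) c_rot.
move: cA; case: s {c_rot} => [|s0 s] //= cA; rewrite rcons_path /= => /and3P[Ras0 s_path Rsa].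
move=> /andP[aN /andP[s0Ns s_uniq]] c_size.
have s_off : all (predC1 a) (s0 :: s).
  by apply/allP => z zs; apply/eqP => za; rewrite -za zs in aN.
have {}s_path : path R s0 s.
  by apply: (sub_in_path _ s_off) s_path => u w ua wa; rewrite add_edge_off.
have Rs : connect R s0 (last s0 s) by apply/connectP; exists s.
have s0a : s0 != a by apply: (allP s_off); rewrite mem_head.
have la : last s0 s != a by apply: (allP s_off); rewrite mem_last.
move: Ras0 Rsa; rewrite /add_edge /= (negbTE s0a) (negbTE la) eqxx /= !andbF !andbT !orbF.
case/orP => [Ras0 | /eqP s0v]; case/orP => [Rsa | /eqP lv].
- apply: R_acyc; exists [:: a, s0 & s]; split => //=; first by rewrite aN s0Ns.
  by rewrite rcons_path /= Ras0 s_path Rsa.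
- by apply: Rav; rewrite -lv (connect_trans (connect1 Ras0)).
- by apply: Rav; rewrite (sym_connect_sym R_sym) -s0v (connect_trans Rs (connect1 Rsa)).
- case: s c_size s0Ns lv {s_path Rs la aN s_uniq s_off cA} => [|w s] //= _.
  by rewrite s0v => /negP + lv; rewrite -lv mem_last.
Qed.

End EdgeSurgery.

Section Forest.
Variables (U : finType) (R : rel U) (A : {pred U}).
Hypotheses (R_sym : symmetric R) (R_irr : irreflexive R).
Hypotheses (R_A : forall u w, R u w -> u \in A) (R_acyc : ~ has_cycle_in R A).

Lemma rem_edge_disconnect x y : R x y -> ~ connect (rem_edge R x y) x y.
Proof.
move=> Rxy /connectP[p p_path p_last].
case/shortenP: p_path p_last => p' p'_path p'_uniq _.
case: p' p'_path p'_uniq => [|z [|w p']] p'_path p'_uniq p'_last.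
- by rewrite p'_last R_irr in Rxy.
- by move: p'_path; rewrite /= p'_last /rem_edge /= !eqxx andbF.
have R_p' : path R x [:: z, w & p'] := sub_path (@rem_edge_sub _ R x y) p'_path.
apply: R_acyc; exists [:: x, z, w & p']; split => //.
  move=> t; rewrite in_cons => /predU1P[-> | t_p]; first exact: R_A Rxy.
  by move: t_p; apply: (path_subset _ R_p') => u0 w0; rewrite R_sym; apply: R_A.
by rewrite /cycle rcons_path R_p' -p'_last R_sym.
Qed.

Lemma uniq_path_shortest x P t : path R x P -> uniq (x :: P) ->
  path R x t -> last x t = last x P -> size P <= size t.
Proof.
elim: P x t => [|y P IHP] x t //= /andP[Rxy P_path] /andP[xNP P_uniq] t_path t_last.
have R'_sym := sym_connect_sym (rem_edge_sym x y R_sym).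
pose S := connect (rem_edge R x y) x.
have yS : ~~ S y by apply/negP; apply: rem_edge_disconnect.
have y_last : connect (rem_edge R x y) y (last y P).
  apply/connectP; exists P => //; apply: (sub_in_path (P := predC1 x)) P_path.
    by move=> u w ux wx Ruw; rewrite rem_edge_off.
  by apply/allP => z zP; apply/eqP => zx; rewrite -zx zP in xNP.
have lastNS : ~~ S (last x t).
  by rewrite t_last; apply: contra yS => /connect_trans; apply; rewrite R'_sym.
have exitS u w : R u w -> S u -> ~~ S w -> u = x /\ w = y.
  move=> Ruw Su Sw; case Euw: (rem_edge R x y u w).
    by move: Sw; rewrite /S (connect_trans Su (connect1 Euw)).
  move: Euw; rewrite /rem_edge /= Ruw /= => /nandP[/negPn/andP[/eqP -> /eqP ->] //|].
  by case/negPn/andP => /eqP uy _; rewrite /S uy in Su; case: (rem_edge_disconnect Rxy).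
have [t' t'_path [t'_last t'_size]] := path_exit exitS t_path (connect0 _ _) lastNS.
by apply: leq_trans t'_size; apply: IHP P_path P_uniq t'_path _; rewrite t'_last.
Qed.

End Forest.

Section Level.
Variable T : finType.
Implicit Types (R : rel (W T)) (r x : W T).

Lemma level_le R r x t :
  path R x t -> last x t = r -> size t < #|W T| -> level R r x <= (size t).+1.
Proof.
move=> t_path t_last t_size; rewrite /level ltnS leqNgt; apply/negP => lt_t.
have := before_find 0 lt_t; rewrite nth_iota // add0n => /negbT/negP; apply.
by apply/existsP; exists (in_tuple t); rewrite t_path t_last eqxx.
Qed.

Lemma level_path R r x : level R r x <= #|W T| ->
  exists2 t, path R x t /\ last x t = r & (size t).+1 = level R r x.
Proof.
rewrite /level => lev_lt.
have : has (fun n => [exists t : n.-tuple (W T), path R x t && (last x t == r)])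
           (iota 0 #|W T|) by rewrite has_find size_iota.
move=> /(nth_find 0); rewrite nth_iota // add0n => /existsP[t /andP[t_path /eqP t_last]].
by exists t; rewrite ?size_tuple.
Qed.

Lemma level_gt R r x m : m <= #|W T| ->
  (forall t, path R x t -> last x t = r -> m <= size t) -> m < level R r x.
Proof.
move=> m_le walk_ge; rewrite ltnNge; apply/negP => lev_le.
have [t [t_path t_last] t_size] := level_path (leq_trans lev_le m_le).
by move: (walk_ge t t_path t_last); rewrite -ltnS t_size ltnNge lev_le.
Qed.

Lemma level_eq R R' r x M : M < #|W T| ->
  (forall t, size t <= M -> last x t = r -> path R x t = path R' x t) ->
  level R r x <= M.+1 -> level R' r x = level R r x.
Proof.
move=> M_lt same_walks lev_le.
have [t [t_path t_last] t_size] := level_path (leq_trans lev_le M_lt).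
have t_le : size t <= M by rewrite -ltnS t_size.
have le_lev' : level R' r x <= level R r x.
  rewrite -t_size; apply: (level_le _ t_last (leq_ltn_trans t_le M_lt)).
  by rewrite -(same_walks t t_le t_last).
have [t' [t'_path t'_last] t'_size] :=
  level_path (leq_trans le_lev' (leq_trans lev_le M_lt)).
have t'_le : size t' <= M by rewrite -ltnS t'_size (leq_trans le_lev').
apply/eqP; rewrite eqn_leq le_lev' -t'_size.
apply: (level_le _ t'_last (leq_ltn_trans t'_le M_lt)).
by rewrite (same_walks t' t'_le t'_last).
Qed.

End Level.

Lemma lex_lt_map_iota (f g : nat -> nat) j n K : j <= K < j + n ->
  (forall i, j <= i < K -> f i = g i) -> f K < g K ->
  lex_lt (map f (iota j n)) (map g (iota j n)).
Proof.
elim: n j => [|n IHn] j.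
  by rewrite addn0 => /andP[jK Kj]; have := leq_ltn_trans jK Kj; rewrite ltnn.
move=> /andP[jK Kn] fg fgK /=; case: (ltngtP j K) jK => // [jK _ | -> _]; last by rewrite fgK.
rewrite fg ?leqnn ?jK // eqxx /= IHn ?orbT //; first by rewrite jK addSnnS.
by move=> i /andP[ji iK]; apply: fg; rewrite iK ltnW.
Qed.

Lemma Hadj_VH (T : finType) (e : rel T) F (x y : W T) :
  Hadj e F x y -> (x \in VH e F) && (y \in VH e F).
Proof. by case: x => [C|w]; case: y => [D|z] //=; rewrite !inE => /and3P[-> -> _]. Qed.

Lemma Hadj_irr (T : finType) (e : rel T) F : irreflexive e -> irreflexive (Hadj e F).
Proof. by move=> e_irr [C|w] //=; rewrite e_irr !andbF. Qed.

Lemma two_edge_sym (T : finType) (e : rel T) F : symmetric (two_edge e F).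
Proof. by move=> [C|w] [D|z] //; rewrite /two_edge /= !andbF. Qed.

Lemma two_edge_Hadj (T : finType) (e : rel T) F : subrel (two_edge e F) (Hadj e F).
Proof. by move=> x y /andP[]. Qed.

Section Exchange.
Variables (T : finType) (e : rel T) (F : {set T}) (B : rel (W T)) (r : W T).
Hypotheses (e_irr : irreflexive e) (B_skel : skeleton e F B r).
Variables (a q v : W T) (p1 p2 : seq (W T)).
Hypotheses (B_path : path B a (q :: p1 ++ v :: p2)) (p2_last : last v p2 = r).
Hypotheses (path_uniq : uniq (a :: q :: p1 ++ v :: p2)) (av_two : two_edge e F a v).

Let B_sym : symmetric B. Proof. by case: B_skel. Qed.
Let B_H : subrel B (Hadj e F). Proof. by case: B_skel. Qed.
Let B_acyc : ~ has_cycle_in B (mem (VH e F)). Proof. by case: B_skel. Qed.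
Let B_irr : irreflexive B.
Proof. by move=> x; apply/negP => /B_H; rewrite Hadj_irr. Qed.
Let B_VH x y : B x y -> x \in VH e F.
Proof. by move=> /B_H /Hadj_VH /andP[]. Qed.
Let B_VHr x y : B x y -> y \in VH e F.
Proof. by rewrite B_sym; apply: B_VH. Qed.

Let Bm := rem_edge B a q.
Let B' := add_edge Bm a v.
Let M := size p2.

Let walk_size_ge x P t : path B x P -> uniq (x :: P) ->
  path B x t -> last x t = r -> last x P = r -> size P <= size t.
Proof.
by move=> P_path P_uniq t_path t_last P_last;
  apply: (uniq_path_shortest B_sym B_irr B_VH B_acyc P_path P_uniq t_path); rewrite t_last.
Qed.

Let q_path : path B q (p1 ++ v :: p2).
Proof. by case/andP: B_path. Qed.
Let v_path : path B v p2.
Proof. by move: q_path; rewrite cat_path => /andP[_ /andP[]]. Qed.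
Let q_uniq : uniq (q :: p1 ++ v :: p2).
Proof. by case/andP: path_uniq. Qed.
Let v_uniq : uniq (v :: p2).
Proof. by move: q_uniq; rewrite -cat_cons cat_uniq => /and3P[]. Qed.
Let q_last : last q (p1 ++ v :: p2) = r.
Proof. by rewrite last_cat. Qed.

Let walk_v t : path B v t -> last v t = r -> M <= size t.
Proof. by move=> t_path t_last; apply: (walk_size_ge v_path v_uniq t_path). Qed.

Let walk_q t : path B q t -> last q t = r -> M.+1 <= size t.
Proof.
move=> t_path t_last; apply: leq_trans (walk_size_ge q_path q_uniq t_path t_last q_last).
by rewrite size_cat /= addnS ltnS leq_addl.
Qed.

Let walk_a t : path B a t -> last a t = r -> M.+2 <= size t.
Proof.
move=> t_path t_last; apply: leq_trans (walk_size_ge B_path path_uniq t_path t_last q_last).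
by rewrite /= size_cat /= addnS !ltnS leq_addl.
Qed.

Let vNa : v != a.
Proof.
by apply: contraTneq path_uniq => ->; rewrite /= !inE mem_cat inE eqxx !orbT.
Qed.
Let vNq : v != q.
Proof. by apply: contraTneq q_uniq => ->; rewrite /= mem_cat inE eqxx orbT. Qed.

Let v_VH : v \in VH e F.
Proof.
case: p2 v_path p2_last => [_ /= -> | z s /andP[/B_VH //]].
by case: B_skel => _ _ _ _ /andP[].
Qed.
Let p2_VH : {subset v :: p2 <= VH e F}.
Proof. by move=> z; rewrite in_cons => /predU1P[-> // | /(path_subset B_VHr v_path)]. Qed.

Let M_lt_W : M < #|W T|.
Proof. by have := max_card (mem (v :: p2)); rewrite (card_uniqP v_uniq). Qed.
Let M_lt_VH : M < #|VH e F|.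
Proof.
have : #|v :: p2| <= #|VH e F| by apply/subset_leq_card/subsetP/p2_VH.
by rewrite (card_uniqP v_uniq).
Qed.

Let not_B_va : ~~ B v a.
Proof.
apply/negP => Bva; apply: B_acyc.
have c_path : path B a (q :: rcons p1 v).
  by move: B_path; rewrite -cat_rcons -cat_cons cat_path => /andP[].
exists (a :: q :: rcons p1 v); split.
- move=> z; rewrite in_cons => /predU1P[-> | /(path_subset B_VHr c_path) //].
  by case/andP: c_path => /B_VH.
- by move: path_uniq; rewrite -cat_rcons -2!cat_cons cat_uniq => /andP[].
- by rewrite /= size_rcons.
- by rewrite /cycle rcons_path c_path /= last_rcons.
Qed.

Let Bm_sym : symmetric Bm.
Proof. exact: rem_edge_sym. Qed.
Let B'_sym : symmetric B'.
Proof. exact/add_edge_sym/Bm_sym. Qed.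
Let B'_av : B' a v.
Proof. by rewrite /B' /add_edge /= !eqxx orbT. Qed.

Let Bm_qv : connect Bm q v.
Proof.
apply/connectP; exists (rcons p1 v); last by rewrite last_rcons.
have p1v_path : path B q (rcons p1 v) by move: q_path; rewrite -cat_rcons cat_path => /andP[].
apply: (sub_in_path (P := predC1 a)) p1v_path => [x y xa ya Bxy|].
  by rewrite /Bm rem_edge_off.
apply/allP => z z_in; apply: contraTneq path_uniq => <-.
by rewrite /= -cat_rcons -cat_cons mem_cat z_in.
Qed.

Let not_Bm_av : ~~ connect Bm a v.
Proof.
apply/negP => Bm_av; apply: (rem_edge_disconnect B_sym B_irr B_VH B_acyc (x := a) (y := q)).
  by case/andP: B_path.
by apply: connect_trans Bm_av _; rewrite (sym_connect_sym Bm_sym).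
Qed.

Let B'_skeleton : skeleton e F B' r.
Proof.
have [_ _ B_conn _ r_root] := B_skel.
split => //.
- move=> x y /orP[/orP[/rem_edge_sub/B_H // | /andP[/eqP-> /eqP->]] | /andP[/eqP-> /eqP->]].
    exact: (two_edge_Hadj av_two).
  by apply: two_edge_Hadj; rewrite two_edge_sym.
- move=> x y xV yV; apply: connect_sub (B_conn x y xV yV) => {xV yV} {}x {}y Bxy.
  have B'_aq : connect B' a q.
    apply: connect_trans (connect1 B'_av) _; rewrite (sym_connect_sym B'_sym).
    by apply: connect_sub Bm_qv => ? ? /(add_edge_sub a v)/connect1.
  case Bm_xy : (Bm x y); first exact/connect1/add_edge_sub.
  move: Bm_xy; rewrite /Bm /rem_edge /= Bxy /=.
  by case/nandP => /negPn/andP[/eqP-> /eqP->] //; rewrite (sym_connect_sym B'_sym).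
- apply: add_edge_acyclic Bm_sym _ not_Bm_av => - [c [c_VH c_uniq c_size c_cycle]].
  by apply: B_acyc; exists c; split => //; exact: (sub_cycle (@rem_edge_sub _ B a q) c_cycle).
Qed.

Let B'_off x y : y != a -> y != q -> y != v -> B' x y = B x y.
Proof.
move=> /negbTE ya /negbTE yq /negbTE yv.
by rewrite /B' /Bm /add_edge /rem_edge /= ya yq yv !andbF !orbF !andbT.
Qed.

(* No walk of length at most [M] to the root can visit [a], [q] or [v] after
   its first vertex, so it does not see the exchanged edges. *)
Let short_walks x t : size t <= M -> last x t = r -> path B x t = path B' x t.
Proof.
elim: t x => [|y t IHt] x //= t_size t_last.
rewrite -IHt ?(ltnW t_size) //; case t_path : (path B y t); rewrite ?andbF //.
have far z : (forall s, path B z s -> last z s = r -> M <= size s) -> y != z.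
  by move=> walk_z; apply: contraTneq t_size => yz; rewrite -ltnNge ltnS walk_z -?yz.
have walk_q' s : path B q s -> last q s = r -> M <= size s.
  by move=> s_path s_last; apply/ltnW/walk_q.
have walk_a' s : path B a s -> last a s = r -> M <= size s.
  by move=> s_path s_last; apply/ltnW/ltnW/walk_a.
by rewrite B'_off ?far.
Qed.

Let level_exchange x : level B r x <= M.+1 -> level B' r x = level B r x.
Proof. exact: level_eq M_lt_W (fun t t_size t_last => short_walks t_size t_last). Qed.

Let level_exchange_eq i x : i <= M.+1 -> (level B' r x == i) = (level B r x == i).
Proof.
move=> i_le; apply/eqP/eqP => lev_i; last by rewrite level_exchange // lev_i.
rewrite -lev_i; apply: level_eq M_lt_W _ _; last by rewrite lev_i.
by move=> t t_size t_last; rewrite short_walks.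
Qed.

Let level_v : level B r v = M.+1.
Proof.
apply/eqP; rewrite eqn_leq (level_le v_path p2_last M_lt_W).
exact: level_gt (ltnW M_lt_W) walk_v.
Qed.

Let level_q : M.+1 < level B r q.
Proof. exact: level_gt M_lt_W walk_q. Qed.

Let level_a : M.+1 < level B r a.
Proof. by apply: level_gt M_lt_W _ => t t_path t_last; apply/ltnW/walk_a. Qed.

Let degB_exchange x : level B r x <= M.+1 -> degB B' x = degB B x + (x == v).
Proof.
move=> lev_x.
have xa : x != a by apply: contraTneq lev_x => ->; rewrite -ltnNge level_a.
have xq : x != q by apply: contraTneq lev_x => ->; rewrite -ltnNge level_q.
rewrite /degB; have [-> | xv] := eqVneq x v.
  have -> : [set y | B' v y] = a |: [set y | B v y].
    apply/setP => y; rewrite !inE /B' /Bm /add_edge /rem_edge /=.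
    by rewrite (negbTE vNa) (negbTE vNq) eqxx /= !andbT orbF orbC.
  by rewrite cardsU1 inE (negbTE not_B_va) addnC.
have -> : [set y | B' x y] = [set y | B x y].
  by apply/setP => y; rewrite !inE B'_sym B'_off // B_sym.
by rewrite addn0.
Qed.

Let E2_exchange : #|E2 e F B| <= #|E2 e F B'|.
Proof.
have E2_sub : [set a; v] |: (E2 e F B :\ [set a; q]) \subset E2 e F B'.
  apply/subsetP => E; rewrite in_setU1 in_setD1 => /orP[/eqP-> | /andP[Eaq]].
    by rewrite inE; apply/existsP; exists a; apply/existsP; exists v; rewrite eqxx B'_av.
  rewrite !inE => /existsP[x /existsP[y /andP[/andP[/eqP E_xy Bxy] xy_two]]].
  apply/existsP; exists x; apply/existsP; exists y; rewrite E_xy eqxx xy_two andbT /=.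
  apply: add_edge_sub; rewrite /Bm /rem_edge /= Bxy /=.
  by apply/andP; split; apply: contraNN Eaq => /andP[/eqP xa /eqP yq];
    rewrite E_xy xa yq ?eqxx // setUC eqxx.
have av_E2 : [set a; v] \notin E2 e F B.
  rewrite inE; apply/existsP => - [x /existsP[y /andP[/andP[/eqP E_xy Bxy] _]]].
  have : x \in [set a; v] by rewrite E_xy set21.
  have : y \in [set a; v] by rewrite E_xy set22.
  have not_B_av : ~~ B a v by rewrite B_sym.
  rewrite !inE => /orP[] /eqP y_eq /orP[] /eqP x_eq; move: Bxy; rewrite x_eq y_eq;
    by rewrite ?B_irr ?(negbTE not_B_va) ?(negbTE not_B_av).
rewrite (cardsD1 [set a; q]); apply: leq_trans (subset_leq_card E2_sub).
by rewrite cardsU1 in_setD1 (negbTE av_E2) andbF /= leq_add2r leq_b1.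
Qed.

Let level_sum_exchange i : i <= M.+1 ->
  \sum_(x in VH e F | level B' r x == i) degB B' x =
  \sum_(x in VH e F | level B r x == i) degB B x +
  \sum_(x in VH e F | level B r x == i) (x == v).
Proof.
move=> i_le; rewrite -big_split /=.
under eq_bigl => x do rewrite level_exchange_eq //.
by apply: eq_bigr => x /andP[_ /eqP lev_x]; rewrite degB_exchange // lev_x.
Qed.

Let level_sums_lt :
  lex_lt [seq \sum_(x in VH e F | level B r x == k) degB B x | k <- iota 1 #|VH e F|]
         [seq \sum_(x in VH e F | level B' r x == k) degB B' x | k <- iota 1 #|VH e F|].
Proof.
apply: (lex_lt_map_iota (K := M.+1)) => [| i /andP[_ i_lt] |]; first by rewrite add1n ltnS; apply: M_lt_VH.
  rewrite level_sum_exchange ?(ltnW i_lt) // [X in _ = _ + X]big1 ?addn0 //.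
  move=> x /andP[_ /eqP lev_x]; case: eqP => [xv | //].
  by move: i_lt; rewrite -lev_x xv level_v ltnn.
rewrite level_sum_exchange // -[X in X < _]addn0 ltn_add2l (bigD1 v) ?eqxx //=.
by rewrite v_VH level_v eqxx.
Qed.

Lemma exchange_higher_config :
  exists B'' : rel (W T), skeleton e F B'' r /\ lex_lt (config e F B r) (config e F B'' r).
Proof.
exists B'; split=> //; rewrite /config /=.
by case: ltngtP E2_exchange => //= <-; rewrite eqxx level_sums_lt.
Qed.

End Exchange.

Theorem lemma25 (T : finType) (e : rel T)
  (e_sym : symmetric e) (e_irr : irreflexive e)
  (G_conn : forall x y : T, connect e x y)
  (F : {set T})
  (F_max : max_induced_forest e F)
  (F_fewest : forall F' : {set T}, max_induced_forest e F' ->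
                #|comps e F| <= #|comps e F'|)
  (B : rel (W T)) (r : W T)
  (B_skel : skeleton e F B r)
  (B_high : forall (B' : rel (W T)) (r' : W T), skeleton e F B' r' ->
              ~~ lex_lt (config e F B r) (config e F B' r'))
  (u : T) (T1 : {set T})
  (u_nontree : u \notin F)
  (T1_tree : T1 \in comps e F)
  (desc : descendant (inner e F B) r (inl T1) (inr u))
  (two : two_edge e F (inr u) (inl T1)) :
  child (inner e F B) r (inl T1) (inr u).
Proof.
case: desc => _ [[|q p] [] //= /andP[inner_q p_path] p_last p_uniq].
rewrite in_cons => /predU1P[-> | u_p]; first by exists p; rewrite /= inner_q.
case/splitPr: u_p p_path p_last p_uniq => p1 p2 p_path p_last p_uniq.
have inner_B : subrel (inner e F B) B by move=> x y /andP[].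
have B_path : path B (inl T1) (q :: p1 ++ inr u :: p2).
  by apply: (sub_path inner_B); rewrite /= inner_q.
have p2_last : last (inr u) p2 = r by rewrite -p_last last_cat.
rewrite two_edge_sym in two.
have [B' [B'_skel higher]] := exchange_higher_config e_irr B_skel B_path p2_last p_uniq two.
by move: (B_high _ _ B'_skel); rewrite higher.
Qed.
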